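(* Let $(\Omega,\mathcal F,\mathbf P)$ be a probability space, $L^\infty=L^\infty(\Omega,\mathcal F,\mathbf P)$ with its norm dual $(L^\infty)^*$, and let $C\subset L^\infty$ be a convex cone such that $C\cap L^\infty_+=\{0\}$, where $L^\infty_+$ is the set of a.s. non-negative elements. Let $C^\circ=\{\xi\in (L^\infty)^*:\langle x,\xi\rangle\le 0 \text{ for all } x\in C\}$. Then for any $f\in (L^\infty)^*$ the following conditions are equivalent: (i) $\sup_{x\in C_1}\langle x,f\rangle<+\infty$, where $C_1=\{x\in C: x^-\le 1 \text{ a.s.}\}$; (ii) there exists $g\in (L^\infty)^*$ such that $g\ge f$ and $g\in C^\circ$.
   Context: $x^-=\max\{-x,0\}$. For $f,g\in (L^\infty)^*$, $g\ge f$ means $\langle x,g-f\rangle\ge 0$ for all $x\in L^\infty_+$. *)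

From HB Require Import structures.
From mathcomp Require Import all_boot all_order all_algebra.
From mathcomp Require Import all_classical all_reals all_analysis.
Set Implicit Arguments. Unset Strict Implicit. Unset Printing Implicit Defensive.
Import Order.TTheory GRing.Theory Num.Theory.
Local Open Scope classical_set_scope.
Local Open Scope ring_scope.

(* Elements of L^infty are represented by their representatives;
   every notion below is invariant under P-a.e. equality. *)
Definition Linf d (T : measurableType d) (R : realType)
    (P : probability T R) : set (T -> R) :=
  [set x : T -> R | measurable_fun [set: T] x /\
           exists M : R, {ae P, forall t, `|x t| <= M}].

Definition negpart (T : Type) (R : realType) (x : T -> R) : T -> R :=
  fun t => Num.max (- x t) 0.

(* A functional
   is a map on representatives that is linear on L^infty, does not depend on
   the representative (a.e.-equality), and is bounded:
   |<x,f>| <= M * ||x||_infty, written as |<x,f>| <= M c for every a.e. bound c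
   of |x|. *)
Definition Linf_dual d (T : measurableType d) (R : realType)
    (P : probability T R) (f : (T -> R) -> R) : Prop :=
  [/\ (forall x y, Linf P x -> Linf P y -> f (x \+ y) = f x + f y),
      (forall (a : R) x, Linf P x -> f (fun t => a * x t) = a * f x),
      (forall x y, Linf P x -> Linf P y ->
         {ae P, forall t, x t = y t} -> f x = f y) &
      (exists M : R, forall x (c : R), Linf P x ->
         {ae P, forall t, `|x t| <= c} -> `|f x| <= M * c)].

(* A subset C of L^infty (as a set of a.e.-classes: closed under a.e. equality
   within L^infty) which is a convex cone. *)
Definition Linf_convex_cone d (T : measurableType d) (R : realType)
    (P : probability T R) (C : set (T -> R)) : Prop :=
  [/\ C `<=` Linf P,
      (forall x y, C x -> Linf P y -> {ae P, forall t, x t = y t} -> C y),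
      C (fun _ => 0) &
      (forall x y (a b : R), 0 <= a -> 0 <= b -> C x -> C y ->
         C (fun t => a * x t + b * y t))].

Definition cone_meets_pos_trivially d (T : measurableType d) (R : realType)
    (P : probability T R) (C : set (T -> R)) : Prop :=
  forall x, C x -> {ae P, forall t, 0 <= x t} -> {ae P, forall t, x t = 0}.

Definition polar d (T : measurableType d) (R : realType)
    (P : probability T R) (C : set (T -> R)) : set ((T -> R) -> R) :=
  [set g | Linf_dual P g /\ forall x, C x -> g x <= 0].

Definition dual_ge d (T : measurableType d) (R : realType)
    (P : probability T R) (g f : (T -> R) -> R) : Prop :=
  forall x, Linf P x -> {ae P, forall t, 0 <= x t} -> 0 <= g x - f x.

Definition C1 d (T : measurableType d) (R : realType)
    (P : probability T R) (C : set (T -> R)) : set (T -> R) :=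
  [set x | C x /\ {ae P, forall t, negpart x t <= 1}].

From HB Require Import structures.
From mathcomp Require Import all_boot all_order all_algebra.
From mathcomp Require Import all_classical all_reals all_analysis.
From mathcomp Require Import ring lra.
Import Order.TTheory GRing.Theory Num.Theory.
Local Open Scope classical_set_scope.
Local Open Scope ring_scope.

(* (ii) -> (i): for x in C_1 the function x + 1 is a.s. non-negative, so
   f x <= g x + g 1 - f 1 <= g 1 - f 1.
   (i) -> (ii): let s bound f on C_1; rescaling gives f x <= s (b + 1) whenever
   x \in C and x^- <= b.  Hence the gauge
     q z = inf { s c - f x : x \in C, c >= 0, z <= x + c a.s. }
   is finite and sublinear on L^infty, and Hahn-Banach yields a linear h <= q.
   Taking x = 0 gives h z <= s c whenever z <= c, so h is continuous and
   non-negative on L^infty_+; taking c = 0 gives h <= -f on C.  Thus g = f + h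
   dominates f and lies in the polar of C. *)

Section HahnBanach.
Variables (R : realType) (V : lmodType R) (S : set V) (q : V -> R).
Hypothesis S0 : S 0.
Hypothesis SD : forall {x y}, S x -> S y -> S (x + y).
Hypothesis SZ : forall a {x}, S x -> S (a *: x).
Hypothesis qD : forall {x y}, S x -> S y -> q (x + y) <= q x + q y.
Hypothesis qZ : forall {a x}, 0 < a -> S x -> q (a *: x) = a * q x.

Let SB {x y} : S x -> S y -> S (x - y).
Proof. by move=> Sx Sy; rewrite -scaleN1r; apply/SD/SZ. Qed.

Lemma sublinear0 : q 0 = 0.
Proof. by have := qZ (ltr0Sn R 1) S0; rewrite scaler0 => h; lra. Qed.

(* Partial linear functionals below [q] are encoded by their graphs, so that
   the union of a chain is an upper bound for it. *)
Definition dominated_graph (G : set (V * R)) :=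
  [/\ forall x a b, G (x, a) -> G (x, b) -> a = b,
      forall x a y b, G (x, a) -> G (y, b) -> G (x + y, a + b),
      forall x a c, G (x, a) -> G (c *: x, c * a) &
      forall x a, G (x, a) -> S x /\ a <= q x].

Lemma dominated_graph_bigcup (F : set (set (V * R))) :
  F `<=` dominated_graph -> total_on F subset ->
  dominated_graph (\bigcup_(G in F) G).
Proof.
move=> Fdom Ftot; split.
- move=> x a b [G FG Ga] [H FH Hb].
  have [GH|HG] := Ftot G H FG FH.
  + by case: (Fdom H FH) => Hfun _ _ _; apply: Hfun (GH _ Ga) Hb.
  + by case: (Fdom G FG) => Gfun _ _ _; apply: Gfun Ga (HG _ Hb).
- move=> x a y b [G FG Ga] [H FH Hb].
  have [GH|HG] := Ftot G H FG FH.
  + by exists H => //; case: (Fdom H FH) => _ HD _ _; apply: HD (GH _ Ga) Hb.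
  + by exists G => //; case: (Fdom G FG) => _ GD _ _; apply: GD Ga (HG _ Hb).
- move=> x a c [G FG Ga]; exists G => //.
  by case: (Fdom G FG) => _ _ GZ _; apply: GZ.
- by move=> x a [G FG Ga]; case: (Fdom G FG) => _ _ _; apply.
Qed.

Lemma dominated_graph0 : dominated_graph [set (0, 0)].
Proof.
split.
- by move=> x a b [_ ->] [_ ->].
- by move=> x a y b [-> ->] [-> ->]; rewrite !addr0.
- by move=> x a c [-> ->]; rewrite scaler0 mulr0.
- by move=> x a [-> ->]; rewrite sublinear0.
Qed.

Lemma dominated_graph_has0 G p : dominated_graph G -> G p -> G (0, 0).
Proof.
case: p => x a [_ _ GZ _] /(GZ _ _ 0).
by rewrite scale0r mul0r.
Qed.

Section Extension.
Variables (G : set (V * R)) (z : V).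
Hypotheses (Gdom : dominated_graph G) (G00 : G (0, 0)) (Sz : S z).

Lemma extension_gap : exists c, forall y a, G (y, a) ->
  a - q (y - z) <= c /\ c <= q (y + z) - a.
Proof.
case: Gdom => _ GD _ Gle.
have gap y1 a1 y2 a2 : G (y1, a1) -> G (y2, a2) ->
    a1 - q (y1 - z) <= q (y2 + z) - a2.
  move=> G1 G2; have [S1 _] := Gle _ _ G1; have [S2 _] := Gle _ _ G2.
  have [_ le12] := Gle _ _ (GD _ _ _ _ G1 G2).
  have := qD (SB S1 Sz) (SD S2 Sz).
  rewrite addrCA subrK addrC; lra.
pose L := [set r | exists y a, G (y, a) /\ r = a - q (y - z)].
have Lub : ubound L (q (0 + z) - 0) by move=> _ [y [a [Gya ->]]]; exact: gap.
exists (sup L) => y a Gya; split.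
  by apply: ub_le_sup; [exists (q (0 + z) - 0) | exists y, a].
apply: ge_sup => [|_ [y' [a' [Gya' ->]]]]; last exact: gap.
by exists (0 - q (0 - z)), 0, 0.
Qed.

Variable c : R.
Hypothesis zG : forall a, ~ G (z, a).
Hypothesis cgap : forall y a, G (y, a) -> a - q (y - z) <= c /\ c <= q (y + z) - a.

Definition graph_extension : set (V * R) :=
  [set p | exists y a t, G (y, a) /\ p = (y + t *: z, a + t * c)].

Lemma graph_extension_proper : G `<` graph_extension.
Proof.
split=> [[y a] Gya|/(_ (z, c)) zcG].
  by exists y, a, 0; rewrite scale0r mul0r !addr0.
by apply: (zG c); apply: zcG; exists 0, 0, 1; rewrite scale1r mul1r !add0r.
Qed.

(* For t <> 0, apply the gap condition to (y, a) rescaled by 1 / |t|. *)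
Lemma graph_extension_le y a t : G (y, a) -> a + t * c <= q (y + t *: z).
Proof.
case: Gdom => _ _ GZ Gle Gya; have [Sy aley] := Gle _ _ Gya.
have [t0|t0|<-] := ltgtP 0 t; last by rewrite scale0r mul0r !addr0.
- have [_ +] := cgap _ _ (GZ _ _ t^-1 Gya).
  have -> : y + t *: z = t *: (t^-1 *: y + z).
    by rewrite scalerDr scalerA mulfV ?gt_eqF // scale1r.
  rewrite (qZ t0 (SD (SZ _ Sy) Sz)) => /(ler_wpM2l (ltW t0)).
  rewrite mulrBr mulrA mulfV ?gt_eqF // mul1r; lra.
- have nt0 : 0 < - t by rewrite oppr_gt0.
  have [+ _] := cgap _ _ (GZ _ _ (- t)^-1 Gya).
  have -> : y + t *: z = - t *: ((- t)^-1 *: y - z).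
    by rewrite scalerBr scalerA mulfV ?gt_eqF // scale1r scaleNr opprK.
  rewrite (qZ nt0 (SB (SZ _ Sy) Sz)) => /(ler_wpM2l (ltW nt0)).
  rewrite mulrBr mulrA mulfV ?gt_eqF // mul1r; lra.
Qed.

Lemma graph_extension_dominated : dominated_graph graph_extension.
Proof.
case: Gdom => Gfun GD GZ Gle; split.
- move=> x a b [y1 [a1 [t1 [G1 [-> ->]]]]] [y2 [a2 [t2 [G2 []]]]] e ->.
  have [t12|t12] := eqVneq t1 t2.
    by subst t2; move: G2; rewrite -(addIr _ e) => G2; rewrite (Gfun _ _ _ G1 G2).
  have e12 : y1 - y2 = (t2 - t1) *: z.
    have -> : y1 = y2 + t2 *: z - t1 *: z by rewrite -e addrK.
    by rewrite scalerBl [y2 + _]addrC addrAC addrK.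
  have /(GZ _ _ (t2 - t1)^-1) := GD _ _ _ _ G1 (GZ _ _ (-1) G2).
  rewrite scaleN1r e12 scalerA mulVf ?subr_eq0 1?eq_sym // scale1r.
  by move/zG.
- move=> x a y b [y1 [a1 [t1 [G1 [-> ->]]]]] [y2 [a2 [t2 [G2 [-> ->]]]]].
  exists (y1 + y2), (a1 + a2), (t1 + t2); split; first exact: GD.
  by congr pair; [rewrite scalerDl addrACA | ring].
- move=> x a k [y [a' [t [Gy [-> ->]]]]].
  exists (k *: y), (k * a'), (k * t); split; first exact: GZ.
  by congr pair; [rewrite scalerDr scalerA | ring].
- move=> x a [y [a' [t [Gy [-> ->]]]]].
  have [Sy _] := Gle _ _ Gy.
  by split; [apply/SD/SZ | exact: graph_extension_le].
Qed.

End Extension.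

Theorem hahn_banach : exists h : V -> R,
  [/\ forall x y, S x -> S y -> h (x + y) = h x + h y,
      forall a x, S x -> h (a *: x) = a * h x &
      forall x, S x -> h x <= q x].
Proof.
have [A [Adom Amax]] := Zorn_bigcup dominated_graph_bigcup.
have A00 : A (0, 0).
  have [[p Ap]|A0] := pselect (A !=set0); first exact: dominated_graph_has0 Ap.
  exfalso; apply: (Amax _ _ dominated_graph0).
  split=> [p Ap|/(_ (0, 0) erefl) A00]; exfalso; apply: A0.
    by exists p.
  by exists (0, 0).
have Atot z : S z -> exists a, A (z, a).
  move=> Sz; apply/not_existsP => zA.
  have [c cgap] := extension_gap _ _ Adom A00 Sz.
  apply: Amax (graph_extension_proper _ _ A00 c zA) _.
  exact: graph_extension_dominated _ _ Adom Sz c zA cgap.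
pose h x := xget 0 [set a | A (x, a)].
have hA x : S x -> A (x, h x) by move=> Sx; apply: xgetPex (Atot _ Sx).
case: Adom => Afun AD AZ Ale; exists h; split.
- move=> x y Sx Sy; apply: Afun (hA _ (SD Sx Sy)) _.
  exact: AD (hA _ Sx) (hA _ Sy).
- by move=> a x Sx; apply: Afun (hA _ (SZ a Sx)) (AZ _ _ _ (hA _ Sx)).
- by move=> x Sx; case: (Ale _ _ (hA _ Sx)).
Qed.
End HahnBanach.
Arguments hahn_banach {R V S q}.

Section EssentiallyBounded.
Context {d : measure_display} {T : measurableType d} {R : realType}
  {P : probability T R}.

Lemma ae_const [Q : Prop] : {ae P, forall t, Q} -> Q.
Proof.
have : ProperFilter (almost_everywhere P).
  apply: ae_properfilter_algebraOfSetsType.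
  by rewrite [X in (0 < X)%E]probability_setT.
by move=> PF; apply: filter_const.
Qed.

Lemma ae_norm_le_ge0 [x : T -> R] [c] : {ae P, forall t, `|x t| <= c} -> 0 <= c.
Proof. by move=> xc; apply: ae_const; apply: filterS xc => t; apply: le_trans. Qed.

Lemma Linf_cst (c : R) : Linf P (cst c).
Proof.
split; first exact: measurable_cst.
by exists `|c|; apply: aeW.
Qed.

Lemma LinfD [x y] : Linf P x -> Linf P y -> Linf P (x + y).
Proof.
move=> [mx [M1 xM1]] [my [M2 yM2]]; split.
  exact: measurable_realfun.measurable_funD.
exists (M1 + M2); apply: filterS2 xM1 yM2 => t xt yt.
by rewrite (le_trans (ler_normD _ _)) // lerD.
Qed.

Lemma LinfZ a [x] : Linf P x -> Linf P (a *: x).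
Proof.
move=> [mx [M xM]]; split.
  exact: measurable_realfun.measurable_funM (measurable_cst a) mx.
exists (`|a| * M); apply: filterS xM => t xt.
by rewrite normrM ler_wpM2l.
Qed.

Lemma LinfN [x] : Linf P x -> Linf P (- x).
Proof. by move=> Lx; rewrite -scaleN1r; apply: LinfZ. Qed.

Lemma LinfB [x y] : Linf P x -> Linf P y -> Linf P (x - y).
Proof. by move=> Lx Ly; apply/LinfD/LinfN. Qed.

Lemma Linf_dualD [f x y] : Linf_dual P f -> Linf P x -> Linf P y ->
  f (x + y) = f x + f y.
Proof. by case=> fD _ _ _; apply: fD. Qed.

Lemma Linf_dualZ [f] a [x] : Linf_dual P f -> Linf P x -> f (a *: x) = a * f x.
Proof. by case=> _ fZ _ _; apply: fZ. Qed.

Lemma Linf_dual_add [f g] :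
  Linf_dual P f -> Linf_dual P g -> Linf_dual P (fun x => f x + g x).
Proof.
move=> [fD fZ fae [Mf fM]] [gD gZ gae [Mg gM]]; split.
- by move=> x y Lx Ly; rewrite fD ?gD //; ring.
- by move=> a x Lx; rewrite fZ ?gZ //; ring.
- by move=> x y Lx Ly xy; rewrite (fae x y) ?(gae x y).
- exists (Mf + Mg) => x c Lx xc; rewrite mulrDl.
  by apply: le_trans (ler_normD _ _) _; apply: lerD; [apply: fM | apply: gM].
Qed.

Lemma Linf_dual_of_le_cst [h : (T -> R) -> R] [s : R] :
  (forall x y, Linf P x -> Linf P y -> h (x + y) = h x + h y) ->
  (forall a x, Linf P x -> h (a *: x) = a * h x) ->
  (forall z c, Linf P z -> 0 <= c -> {ae P, forall t, z t <= c} -> h z <= s * c) ->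
  Linf_dual P h.
Proof.
move=> hD hZ hle.
have hN x : Linf P x -> h (- x) = - h x.
  by move=> Lx; rewrite -scaleN1r hZ // mulN1r.
have hB x y : Linf P x -> Linf P y -> h (x - y) = h x - h y.
  by move=> Lx Ly; rewrite hD ?hN //; apply: LinfN.
split => //.
- move=> x y Lx Ly xy.
  have xy0 : {ae P, forall t, x t - y t <= 0}.
    by apply: filterS xy => t ->; rewrite subrr.
  have yx0 : {ae P, forall t, y t - x t <= 0}.
    by apply: filterS xy => t ->; rewrite subrr.
  have := hle _ _ (LinfB Lx Ly) (lexx 0) xy0.
  have := hle _ _ (LinfB Ly Lx) (lexx 0) yx0.
  rewrite !hB // mulr0; lra.
- exists s => x c Lx xc; have c0 := ae_norm_le_ge0 xc.
  have xc' : {ae P, forall t, x t <= c}.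
    by apply: filterS xc => t; apply: le_trans; rewrite ler_norm.
  have xNc : {ae P, forall t, - x t <= c}.
    by apply: filterS xc => t; apply: le_trans; rewrite -normrN ler_norm.
  have := hle _ _ Lx c0 xc'; have := hle _ _ (LinfN Lx) c0 xNc.
  by rewrite hN // ler_norml => ? ?; apply/andP; split; lra.
Qed.

End EssentiallyBounded.

Section ConeGauge.
Context d (T : measurableType d) (R : realType) (P : probability T R).
Variables (C : set (T -> R)) (f : (T -> R) -> R) (s : R).
Hypotheses (Ccone : Linf_convex_cone P C) (fdual : Linf_dual P f).
Hypothesis fC1 : forall x, C1 P C x -> f x <= s.

Let CL [x] : C x -> Linf P x. Proof. by case: Ccone => CL _ _ _; apply: CL. Qed.
Let C0 : C 0. Proof. by case: Ccone. Qed.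

Let CZ a [x] : 0 <= a -> C x -> C (a *: x).
Proof.
case: Ccone => _ _ _ Ccomb a0 Cx; have := Ccomb _ _ a 0 a0 (lexx 0) Cx C0.
by congr C; apply: funext => t; rewrite mul0r addr0.
Qed.

Let CD [x y] : C x -> C y -> C (x + y).
Proof.
case: Ccone => _ _ _ Ccomb Cx Cy; have := Ccomb _ _ 1 1 ler01 ler01 Cx Cy.
by congr C; apply: funext => t; rewrite !mul1r.
Qed.

Let fD [x y] : Linf P x -> Linf P y -> f (x + y) = f x + f y.
Proof. exact: Linf_dualD. Qed.

Let fZ a [x] : Linf P x -> f (a *: x) = a * f x.
Proof. exact: Linf_dualZ. Qed.

Let f0 : f 0 = 0.
Proof. by have := fZ 0 (Linf_cst 0); rewrite scale0r mul0r. Qed.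

Lemma cone_value_le x b : C x -> 0 <= b ->
  {ae P, forall t, negpart x t <= b} -> f x <= s * (b + 1).
Proof.
move=> Cx b0 xb; have b1 : 0 < b + 1 by lra.
have : C1 P C ((b + 1)^-1 *: x).
  split; first by apply: CZ => //; rewrite invr_ge0 ltW.
  apply: filterS xb => t; rewrite /negpart !ge_max ler01 andbT => /andP[xtb _].
  rewrite -mulrN ler_pdivrMl // mulr1; lra.
by move=> /fC1; rewrite (fZ _ (CL Cx)) ler_pdivrMl // mulrC.
Qed.

Definition cone_gauge_set (z : T -> R) : set R :=
  [set e | exists x c, [/\ C x, 0 <= c, {ae P, forall t, z t <= x t + c} &
                          e = s * c - f x]].

Definition cone_gauge (z : T -> R) : R := inf (cone_gauge_set z).

Lemma cone_gauge_set_neq0 z : Linf P z -> cone_gauge_set z !=set0.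
Proof.
move=> [_ [m zm]]; have m0 := ae_norm_le_ge0 zm.
exists (s * m - f 0), 0, m; split=> //.
by apply: filterS zm => t; rewrite add0r; apply: le_trans; rewrite ler_norm.
Qed.

Lemma cone_gauge_set_lbound z : Linf P z -> has_lbound (cone_gauge_set z).
Proof.
move=> [_ [m zm]]; have m0 := ae_norm_le_ge0 zm.
exists (- (s * (m + 1))) => _ [x [c [Cx c0 zxc ->]]].
suff : f x <= s * ((m + c) + 1) by lra.
apply: cone_value_le => //; first lra.
apply: filterS2 zm zxc => t zt zxct; rewrite /negpart ge_max.
have := ler_norm (- z t); rewrite normrN => Nzt.
by apply/andP; split; lra.
Qed.

Lemma cone_gauge_le [z x c] : Linf P z -> C x -> 0 <= c ->
  {ae P, forall t, z t <= x t + c} -> cone_gauge z <= s * c - f x.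
Proof.
by move=> Lz Cx c0 zxc; apply: ge_inf; [exact: cone_gauge_set_lbound | exists x, c].
Qed.

Lemma cone_gauge_ge z r :
  Linf P z -> lbound (cone_gauge_set z) r -> r <= cone_gauge z.
Proof. by move=> Lz; apply: lb_le_inf; exact: cone_gauge_set_neq0. Qed.

Lemma cone_gaugeD z1 z2 : Linf P z1 -> Linf P z2 ->
  cone_gauge (z1 + z2) <= cone_gauge z1 + cone_gauge z2.
Proof.
move=> L1 L2.
suff : cone_gauge (z1 + z2) - cone_gauge z2 <= cone_gauge z1 by lra.
apply: cone_gauge_ge => // _ [x1 [c1 [Cx1 c10 zxc1 ->]]].
suff : cone_gauge (z1 + z2) - (s * c1 - f x1) <= cone_gauge z2 by lra.
apply: cone_gauge_ge => // _ [x2 [c2 [Cx2 c20 zxc2 ->]]].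
suff : cone_gauge (z1 + z2) <= s * (c1 + c2) - f (x1 + x2).
  by rewrite (fD (CL Cx1) (CL Cx2)); lra.
apply: cone_gauge_le; [exact: LinfD | exact: CD | exact: addr_ge0 |].
by apply: filterS2 zxc1 zxc2 => t; rewrite !fctE; lra.
Qed.

Lemma cone_gaugeZ a z : 0 < a -> Linf P z -> cone_gauge (a *: z) = a * cone_gauge z.
Proof.
suff le a' z' : 0 < a' -> Linf P z' -> cone_gauge (a' *: z') <= a' * cone_gauge z'.
  move=> a0 Lz; apply/eqP; rewrite eq_le le //=.
  have ai : 0 < a^-1 by rewrite invr_gt0.
  have := le _ _ ai (LinfZ a Lz); rewrite scalerA mulVf ?gt_eqF // scale1r.
  by rewrite -(ler_pM2l a0) mulrA mulfV ?gt_eqF // mul1r.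
move=> a0 Lz; rewrite -ler_pdivrMl //.
apply: cone_gauge_ge => // _ [x [c [Cx c0 zxc ->]]].
rewrite ler_pdivrMl // mulrBr -(fZ _ (CL Cx)) mulrCA.
apply: cone_gauge_le; [exact: LinfZ | exact/CZ/Cx/ltW | exact/mulr_ge0/c0/ltW |].
apply: filterS zxc => t zt.
by have := ler_wpM2l (ltW a0) zt; rewrite mulrDr.
Qed.

Lemma cone_gauge_cst [z c] : Linf P z -> 0 <= c -> {ae P, forall t, z t <= c} ->
  cone_gauge z <= s * c.
Proof.
move=> Lz c0 zc; have := cone_gauge_le Lz C0 c0; rewrite f0 subr0; apply.
by apply: filterS zc => t; rewrite add0r.
Qed.

Lemma cone_gauge_cone [x] : C x -> cone_gauge x <= - f x.
Proof.
move=> Cx; have := cone_gauge_le (CL Cx) Cx (lexx 0); rewrite mulr0 add0r; apply.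
by apply: aeW => t; rewrite addr0.
Qed.

Lemma polar_majorant_exists :
  exists g, Linf_dual P g /\ dual_ge P g f /\ polar P C g.
Proof.
have [h [hD hZ hq]] := hahn_banach (Linf_cst 0) LinfD LinfZ
  cone_gaugeD cone_gaugeZ.
have hcst z c : Linf P z -> 0 <= c -> {ae P, forall t, z t <= c} -> h z <= s * c.
  by move=> Lz c0 zc; apply: le_trans (hq _ Lz) (cone_gauge_cst Lz c0 zc).
have gdual := Linf_dual_add fdual (Linf_dual_of_le_cst hD hZ hcst).
exists (fun x => f x + h x); split=> //; split.
- move=> x Lx x0.
  have Nx0 : {ae P, forall t, -1 * x t <= 0}.
    by apply: filterS x0 => t; rewrite mulN1r oppr_le0.
  have := hcst _ _ (LinfZ (-1) Lx) (lexx 0) Nx0.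
  rewrite hZ // mulN1r mulr0; lra.
- by split=> // x Cx; have := le_trans (hq _ (CL Cx)) (cone_gauge_cone Cx); lra.
Qed.

End ConeGauge.

Lemma polar_majorant_bound d (T : measurableType d) (R : realType)
    (P : probability T R) (C : set (T -> R)) (f g : (T -> R) -> R) x :
  C `<=` Linf P -> Linf_dual P f -> Linf_dual P g -> dual_ge P g f ->
  polar P C g -> C1 P C x -> f x <= g (cst 1) - f (cst 1).
Proof.
move=> CL fdual gdual gf [_ gC] [Cx x1]; have Lx := CL _ Cx.
have x10 : {ae P, forall t, 0 <= x t + 1}.
  by apply: filterS x1 => t; rewrite /negpart ge_max => /andP[? _]; lra.
have := gf _ (LinfD Lx (Linf_cst 1)) x10.
rewrite (Linf_dualD fdual Lx (Linf_cst 1)) (Linf_dualD gdual Lx (Linf_cst 1)).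
by have := gC _ Cx; lra.
Qed.

Lemma ereal_sup_lt_pinfty_ub (T : Type) (R : realType) (A : set T) (u : T -> R) :
  (ereal_sup [set (u x)%:E | x in A] < +oo)%E ->
  exists s, forall x, A x -> u x <= s.
Proof.
move=> supA; exists (fine (ereal_sup [set (u x)%:E | x in A])) => x Ax.
have : ((u x)%:E <= ereal_sup [set (u x)%:E | x in A])%E.
  by apply: ereal_sup_ubound; exists x.
by move: supA; case: ereal_sup => // [r _|_]; rewrite ?lee_fin // leeNy_eq.
Qed.

Theorem corollary1 (d : measure_display) (T : measurableType d) (R : realType)
  (P : probability T R) (C : set (T -> R)) :
  Linf_convex_cone P C -> cone_meets_pos_trivially P C ->
  forall f : (T -> R) -> R, Linf_dual P f ->
  ((ereal_sup [set (f x)%:E | x in C1 P C] < +oo)%E <->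
   exists g : (T -> R) -> R, Linf_dual P g /\ dual_ge P g f /\ polar P C g).
Proof.
move=> Ccone _ f fdual; split=> [/ereal_sup_lt_pinfty_ub [s fC1]|].
  exact: polar_majorant_exists Ccone fdual fC1.
move=> [g [gdual [gf gpolar]]].
apply: le_lt_trans (ltry (g (cst 1) - f (cst 1))).
apply: ge_ereal_sup => _ [x C1x <-]; rewrite lee_fin.
by case: Ccone => CL _ _ _; apply: polar_majorant_bound gpolar C1x.
Qed.
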